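(* Let $L/K_P$ be a finite extension. There is a unique homomorphism $r:\mathbf{S}_L\to\mathbb{Q}$ such that for every $s\in\mathbf{S}_L$ and every $\alpha\in L^+$, $v_L(\alpha^s)=r(s)\cdot v_L(\alpha)$.
   Context: $P$ is a closed point of a smooth projective curve over a finite field of characteristic $p$, $K_P$ the completion of the function field at $P$, $\mathbb{C}_P$ the completion of an algebraic closure of $K_P$, $v_L=e_{L/K_P}v_P$ the normalized valuation of $L$ extended to $\mathbb{C}_P$. $L^+=L^\times/\mu_L$ ($\mu_L$ = roots of unity of $L$), and $U_L$ denotes the $1$-units of $L$, identified with a subgroup of $L^+$. The Goss plane $\mathbf{S}_L$ is the group of homomorphisms $s:L^+\to\mathbb{C}_P^\times$ for which there is $y(s)\in\mathbb{Z}_p$ with $s(u)=u^{y(s)}$ for all $u\in U_L$; one writes $\alpha^s=s(\alpha)$ and the group law on $\mathbf{S}_L$ additively. *)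

(* Abstract (axiomatized-by-hypotheses) setting for the
   completion C_P of an algebraic closure of a local field K_P of char p. *)
From HB Require Import structures.
From mathcomp Require Import all_boot all_order all_algebra.
Set Implicit Arguments. Unset Strict Implicit. Unset Printing Implicit Defensive.
Import Order.TTheory GRing.Theory Num.Theory.
Local Open Scope ring_scope.

Section ValuedField.
Variables (C : fieldType) (v : C -> rat).

(* v is a (rank one, Q-valued) valuation on C^x; v 0 is irrelevant *)
Definition is_valuation : Prop :=
  (forall x y : C, x != 0 -> y != 0 -> v (x * y) = v x + v y) /\
  (forall x y : C, x != 0 -> y != 0 -> x + y != 0 ->
     Num.min (v x) (v y) <= v (x + y)).

(* x and y are M-close: |x - y| <= exp(-M) *)
Definition vclose (M : rat) (x y : C) : Prop := x = y \/ M <= v (x - y).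

Definition vlim (a : nat -> C) (l : C) : Prop :=
  forall M : rat, exists N : nat, forall n, (N <= n)%N -> vclose M (a n) l.

Definition vcauchy (a : nat -> C) : Prop :=
  forall M : rat, exists N : nat, forall m n, (N <= m)%N -> (N <= n)%N ->
    vclose M (a m) (a n).

Definition vcomplete (A : {pred C}) : Prop :=
  forall a : nat -> C, (forall n, a n \in A) -> vcauchy a ->
    exists2 l, l \in A & vlim a l.

Definition is_subfield (A : {pred C}) : Prop :=
  [/\ 0 \in A, 1 \in A,
      forall x y, x \in A -> y \in A -> x - y \in A,
      forall x y, x \in A -> y \in A -> x * y \in A &
      forall x, x \in A -> x != 0 -> x^-1 \in A].

(* the residue field O_A / m_A of A is finite *)
Definition finite_residue (A : {pred C}) : Prop :=
  exists s : seq C, (forall y, y \in s -> y \in A /\ (y = 0 \/ 0 <= v y)) /\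
    forall x, x \in A -> (x = 0 \/ 0 <= v x) ->
      exists2 y, y \in s & (x = y \/ 0 < v (x - y)).

Definition algebraic_over (A : {pred C}) (x : C) : Prop :=
  exists q : {poly C}, [/\ q != 0, forall i, q`_i \in A & root q x].

Definition finite_ext (K L : {pred C}) : Prop :=
  {subset K <= L} /\
  exists b : seq C, (forall y, y \in b -> y \in L) /\
    forall x, x \in L -> exists c : nat -> C,
      (forall i, c i \in K) /\ x = \sum_(i < size b) c i * b`_i.

End ValuedField.

Section GossPlane.
Variables (C : fieldType) (v : C -> rat) (p : nat) (L : {pred C}).

Definition root_of_unity_in (z : C) : Prop :=
  z \in L /\ exists n : nat, (0 < n)%N /\ z ^+ n = 1.

Definition one_unit (u : C) : Prop := u \in L /\ (u = 1 \/ 0 < v (u - 1)).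

(* s : C -> C represents a homomorphism L^+ = L^x / mu_L -> C^x
   (only its values on L^x matter) *)
Definition hom_Lplus (s : C -> C) : Prop :=
  [/\ forall x y, x \in L -> y \in L -> x != 0 -> y != 0 -> s (x * y) = s x * s y,
      forall x, x \in L -> x != 0 -> s x != 0 &
      forall z, root_of_unity_in z -> s z = 1].

(* A p-adic integer y in Z_p, represented by a sequence of naturals
   y_n with y_(n+1) = y_n mod p^n (e.g. its truncations); for a 1-unit u,
   u^y is the v-adic limit of u^(y_n). *)
Definition padic_seq (y : nat -> nat) : Prop :=
  forall n, y n.+1 = y n %[mod p ^ n].

Definition in_Goss (s : C -> C) : Prop :=
  hom_Lplus s /\
  exists2 y : nat -> nat, padic_seq y &
    forall u, one_unit u -> vlim v (fun n => u ^+ y n) (s u).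

(* additive group law of S_L: (s + t)(alpha) = alpha^s alpha^t *)
Definition goss_add (s t : C -> C) : C -> C := fun x => s x * t x.

Definition goss_hom (r : (C -> C) -> rat) : Prop :=
  forall s t, in_Goss s -> in_Goss t -> r (goss_add s t) = r s + r t.

End GossPlane.

From HB Require Import structures.
From mathcomp Require Import all_boot all_order all_algebra ring.
Set Implicit Arguments. Unset Strict Implicit. Unset Printing Implicit Defensive.
Import Order.TTheory GRing.Theory Num.Theory.
Local Open Scope ring_scope.

(* The homomorphism is r(s) = v_L(pi^s) for a uniformizer pi of L; uniqueness
   follows by taking alpha = pi.  The point is that u^s has valuation 0 for
   every unit u of L: as the residue field of L is finite, some power w = u^N
   is a 1-unit, so w^s is a limit of powers of w, all of valuation 0, whence
   N v(u^s) = v(w^s) = 0.  Writing alpha = u pi^z with z = v_L(alpha) then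
   gives v_L(alpha^s) = z v_L(pi^s).
   Finiteness of the residues of the powers of u is obtained directly: the
   powers 1, u, ..., u^d (d the size of a K-spanning set of L) are linearly
   dependent over K; normalizing a dependence relation makes u^J congruent
   modulo the maximal ideal to an O_K-combination of 1, ..., u^(J-1), hence so
   is every power of u, with coefficients among finitely many residue
   representatives of K, and by pigeonhole two powers of u are congruent. *)

Lemma finite_pigeonhole (T : finType) (P : nat -> T -> Prop) :
  (forall n, exists t, P n t) -> exists i j t, [/\ (i < j)%N, P i t & P j t].
Proof.
move=> P_total.
have /fin_all_exists[f fP] : forall k : 'I_#|T|.+1, exists t, P k t.
  by move=> k; apply: P_total.
have /injectivePn[x [y x_neq_y fxy]] : ~~ injectiveb f.
  by apply/injectiveP => /leq_card; rewrite card_ord ltnn.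
have [lt_xy|lt_yx|/val_inj eq_xy] := ltngtP x y.
- by exists x, y, (f x); split; rewrite // fxy.
- by exists y, x, (f x); split; rewrite // fxy.
- by rewrite eq_xy eqxx in x_neq_y.
Qed.

Section SubfieldSpan.
Variables (C : fieldType) (K : {pred C}).
Hypothesis K_subfield : is_subfield K.

Lemma subfield_divring_closed : divring_closed K.
Proof.
case: K_subfield => K0 K1 KB KM KV; split => // x y xK yK.
have [->|y0] := eqVneq y 0; first by rewrite invr0 mulr0.
exact/KM/KV.
Qed.

HB.instance Definition _ :=
  GRing.isDivringClosed.Build C K subfield_divring_closed.

HB.instance Definition _ :=
  [SubChoice_isSubComUnitRing of {x : C | x \in K} by <:].
HB.instance Definition _ :=
  [SubComUnitRing_isSubIntegralDomain of {x : C | x \in K} by <:].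
HB.instance Definition _ :=
  [SubIntegralDomain_isSubField of {x : C | x \in K} by <:].

Lemma subfield_span_dependent (b : seq C) (w : nat -> C) :
    (forall i, (i <= size b)%N -> exists c : nat -> C,
       (forall j, c j \in K) /\ w i = \sum_(j < size b) c j * b`_j) ->
  exists a : nat -> C, [/\ forall i, a i \in K,
    exists2 i, (i <= size b)%N & a i != 0 &
    \sum_(i < (size b).+1) a i * w i = 0].
Proof.
set d := size b => w_span.
have /fin_all_exists[c cP] : forall i : 'I_d.+1, exists c : nat -> C,
    (forall j, c j \in K) /\ w i = \sum_(j < d) c j * b`_j.
  by move=> i; apply: w_span; rewrite -ltnS.
(* Linear algebra over the field of elements of K, read back in C. *)
pose M : 'M[{x : C | x \in K}]_(d.+1, d) := \matrix_(i, j) insubd 0 (c i j).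
have valM i j : val (M i j) = c i j by rewrite mxE insubdK //; case: (cP i).
clearbody M.
have ker_neq0 : kermx M != 0.
  by rewrite -mxrank_eq0 mxrank_ker subn_eq0 -ltnNge ltnS rank_leq_col.
have [r /sub_kermxP rM r_neq0] := rowV0Pn ker_neq0.
exists (fun i => val (r 0 (inord i))); split.
- by move=> i; apply: valP.
- have [i ri] := rV0Pn _ r_neq0.
  by exists i; [rewrite -ltnS | rewrite inord_val fmorph_eq0].
- under eq_bigr => i _ do rewrite inord_val (proj2 (cP i)) mulr_sumr.
  rewrite exchange_big /= big1 // => j _.
  have := congr1 (map_mx val) rM; rewrite map_mxM map_mx0 => /rowP/(_ j).
  rewrite !mxE => rMj; under eq_bigr do rewrite mulrA.
  rewrite -mulr_suml (_ : \sum_(i < d.+1) _ = 0) ?mul0r // -[RHS]rMj.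
  by apply: eq_bigr => i _; rewrite !mxE -valM.
Qed.
End SubfieldSpan.

Section HomLplus.
Variables (C : fieldType) (L : {pred C}) (s : C -> C).
Hypotheses (L_subfield : is_subfield L) (s_hom : hom_Lplus L s).

HB.instance Definition _ :=
  GRing.isDivringClosed.Build C L (subfield_divring_closed L_subfield).

Lemma hom_LplusM x y : x \in L -> y \in L -> x != 0 -> y != 0 ->
  s (x * y) = s x * s y.
Proof. by case: s_hom => sM _ _; apply: sM. Qed.

Lemma hom_Lplus_neq0 x : x \in L -> x != 0 -> s x != 0.
Proof. by case: s_hom => _ s_neq0 _; apply: s_neq0. Qed.

Lemma hom_Lplus1 : s 1 = 1.
Proof. by case: s_hom => _ _; apply; split; [exact: rpred1 | exists 1%N]. Qed.

Lemma hom_LplusX x n : x \in L -> x != 0 -> s (x ^+ n) = s x ^+ n.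
Proof.
move=> xL x0; elim: n => [|n IHn]; first by rewrite !expr0 hom_Lplus1.
by rewrite !exprS hom_LplusM ?rpredX ?expf_neq0 ?IHn.
Qed.

Lemma hom_LplusV x : x \in L -> x != 0 -> s x^-1 = (s x)^-1.
Proof.
move=> xL x0; apply: (mulfI (hom_Lplus_neq0 xL x0)).
by rewrite -hom_LplusM ?rpredV ?invr_eq0 // !divff ?hom_Lplus1 ?hom_Lplus_neq0.
Qed.

Lemma hom_LplusXz x (z : int) : x \in L -> x != 0 -> s (x ^ z) = s x ^ z.
Proof.
move=> xL x0; case: z => n; first exact: hom_LplusX.
rewrite -[x ^ _]/((x ^+ n.+1)^-1) -[s x ^ _]/((s x ^+ n.+1)^-1).
by rewrite hom_LplusV ?rpredX ?expf_neq0 ?hom_LplusX.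
Qed.

End HomLplus.

Section Valuation.
Variables (C : fieldType) (v : C -> rat).
Hypothesis v_valuation : is_valuation v.

Lemma vM x y : x != 0 -> y != 0 -> v (x * y) = v x + v y.
Proof. by case: v_valuation => vM _; apply: vM. Qed.

Lemma vD_min x y : x != 0 -> y != 0 -> x + y != 0 ->
  Num.min (v x) (v y) <= v (x + y).
Proof. by case: v_valuation => _ vD; apply: vD. Qed.

Lemma v1 : v 1 = 0.
Proof.
by apply: (@addrI _ (v 1)); rewrite addr0 -vM ?oner_neq0 // mulr1.
Qed.

Lemma vV x : x != 0 -> v x^-1 = - v x.
Proof.
by move=> x0; apply/eqP; rewrite -addr_eq0 addrC -vM ?invr_eq0 // mulfV ?v1.
Qed.

Lemma vN x : x != 0 -> v (- x) = v x.
Proof.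
have N1_neq0 : (-1 : C) != 0 by rewrite oppr_eq0 oner_neq0.
have : v (-1) *+ 2 = 0 by rewrite mulr2n -vM // mulrNN mulr1 v1.
move/eqP; rewrite mulrn_eq0 /= => /eqP vN1 x0.
by rewrite -mulN1r vM // vN1 add0r.
Qed.

Lemma vX x n : x != 0 -> v (x ^+ n) = n%:R * v x.
Proof.
move=> x0; elim: n => [|n IHn]; first by rewrite expr0 v1 mul0r.
by rewrite exprS vM ?expf_neq0 // IHn mulrSr mulrDl mul1r addrC.
Qed.

Lemma vXz x (z : int) : x != 0 -> v (x ^ z) = z%:~R * v x.
Proof.
move=> x0; case: z => n; first by rewrite vX.
by rewrite -[x ^ _]/((x ^+ n.+1)^-1) vV ?expf_neq0 // vX // NegzE mulrNz mulNr.
Qed.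

Lemma v_close x y : x != 0 -> (x = y \/ v x < v (x - y)) -> v y = v x.
Proof.
move=> x0 [<- //|lt_x_xy].
have [xy0|xy_neq0] := eqVneq (x - y) 0; first by rewrite -(subr0_eq xy0).
have y0 : y != 0 by apply: contraTneq lt_x_xy => ->; rewrite subr0 ltxx.
have yx_neq0 : y - x != 0 by rewrite -opprB oppr_eq0.
have le_yx : v y <= v x.
  move: (vD_min y0 xy_neq0); rewrite subrKC => /(_ x0).
  by rewrite ge_min [v (x - y) <= _]leNgt lt_x_xy orbF.
have := vD_min x0 yx_neq0; rewrite subrKC -opprB vN // => /(_ y0).
rewrite ge_min => /orP[le_xy|]; first by apply/eqP; rewrite eq_le le_yx.
by move=> /(lt_le_trans lt_x_xy)/(le_lt_trans le_yx); rewrite ltxx.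
Qed.

Lemma vB_min x y : x != 0 -> y != 0 -> x - y != 0 ->
  Num.min (v x) (v y) <= v (x - y).
Proof.
by move=> x0 y0 xy0; rewrite -(vN y0); apply: vD_min; rewrite ?oppr_eq0.
Qed.

(* One statement for the valuation ring (b = true) and its ideal (b = false). *)
Lemma vB_lteif c b x y :
  (x == 0) || (c < v x ?<= if b) -> (y == 0) || (c < v y ?<= if b) ->
  (x - y == 0) || (c < v (x - y) ?<= if b).
Proof.
have [->|x0] := eqVneq x 0.
  by rewrite sub0r oppr_eq0 => _; case: eqVneq => // y0; rewrite vN.
have [->|y0] := eqVneq y 0; first by rewrite subr0 (negPf x0).
have [//|xy0 /= cx cy] := eqVneq (x - y) 0.
rewrite -[b]andbT (lteif_trans (C2 := true) _ (vB_min x0 y0 xy0)) //.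
by rewrite lteif_minr cx cy.
Qed.

(* [is_valuation] says nothing about [v 0], hence the explicit [x == 0]. *)
Definition vint : {pred C} := [pred x | (x == 0) || (0 <= v x)].
Definition vsmall : {pred C} := [pred x | (x == 0) || (0 < v x)].

Lemma vintP x : reflect (x = 0 \/ 0 <= v x) (x \in vint).
Proof. by apply: (iffP orP) => -[/eqP|]; auto. Qed.

Lemma vsmallP x : reflect (x = 0 \/ 0 < v x) (x \in vsmall).
Proof. by apply: (iffP orP) => -[/eqP|]; auto. Qed.

Lemma vint_subring_closed : subring_closed vint.
Proof.
split=> [|x y|x y]; first by rewrite inE v1 lexx orbT.
  exact: (@vB_lteif 0 true).
have [->|x0] := eqVneq x 0; first by rewrite mul0r inE eqxx.
have [->|y0] := eqVneq y 0; first by rewrite mulr0 !inE eqxx.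
rewrite !inE (negPf x0) (negPf y0) mulf_eq0 (negPf x0) (negPf y0) vM //.
exact: addr_ge0.
Qed.

HB.instance Definition _ :=
  GRing.isSubringClosed.Build C vint vint_subring_closed.

Lemma vsmall_zmod_closed : zmod_closed vsmall.
Proof. by split=> [|x y]; rewrite ?inE ?eqxx //; apply: (@vB_lteif 0 false). Qed.

HB.instance Definition _ := GRing.isZmodClosed.Build C vsmall vsmall_zmod_closed.

Lemma vsmallMl x y : x \in vint -> y \in vsmall -> x * y \in vsmall.
Proof.
have [->|x0] := eqVneq x 0; first by rewrite mul0r !rpred0.
have [->|y0] := eqVneq y 0; first by rewrite mulr0 !rpred0.
rewrite !inE (negPf x0) (negPf y0) mulf_eq0 (negPf x0) (negPf y0) vM //.
exact: ltr_wpDl.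
Qed.

Lemma vsmall_unitMl x y : x != 0 -> v x = 0 -> x * y \in vsmall -> y \in vsmall.
Proof.
move=> x0 vx0; have [->|y0] := eqVneq y 0; first by rewrite rpred0.
by rewrite !inE mulf_eq0 (negPf x0) (negPf y0) vM // vx0 add0r.
Qed.

Lemma vsmall1 : 1 \notin vsmall.
Proof. by rewrite inE oner_eq0 v1 ltxx. Qed.

Lemma goss_v_one_unit p (L : {pred C}) s w :
  in_Goss v p L s -> one_unit v L w -> w != 0 -> v w = 0 -> v (s w) = 0.
Proof.
move=> [_ [y _ s_lim]] w1 w0 vw; have [N /(_ N (leqnn N)) close] := s_lim w w1 1.
have vwy : v (w ^+ y N) = 0 by rewrite vX // vw mulr0.
rewrite (@v_close (w ^+ y N)) ?expf_neq0 //.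
by case: close => [|le1]; [left | right; rewrite vwy (lt_le_trans ltr01)].
Qed.

Section Extension.
Variables (K L : {pred C}).
Hypotheses (K_subfield : is_subfield K) (L_subfield : is_subfield L).
Hypotheses (LK_finite : finite_ext K L) (K_residue : finite_residue v K).

HB.instance Definition _ :=
  GRing.isDivringClosed.Build C K (subfield_divring_closed K_subfield).
HB.instance Definition _ :=
  GRing.isDivringClosed.Build C L (subfield_divring_closed L_subfield).

Definition Kint : {pred C} := [predI K & vint].

Lemma Kint_subring_closed : subring_closed Kint.
Proof.
split=> [|x y /andP[xK xint] /andP[yK yint]|x y /andP[xK xint] /andP[yK yint]].
- by rewrite inE rpred1 rpred1.
- by rewrite inE rpredB ?rpredB.
- by rewrite inE rpredM ?rpredM.
Qed.

HB.instance Definition _ :=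
  GRing.isSubringClosed.Build C Kint Kint_subring_closed.

Lemma monic_relation_mod (u : C) (a : nat -> C) n :
    u \in vint -> (forall i, a i \in K) -> (exists2 i, (i < n)%N & a i != 0) ->
    \sum_(i < n) a i * u ^+ i = 0 ->
  exists J, exists2 beta : nat -> C, (forall i, beta i \in Kint) &
    u ^+ J - \sum_(i < J) beta i * u ^+ i \in vsmall.
Proof.
move=> u_int aK [i0 i0n ai0] rel.
case: (@arg_minP _ _ _ (Ordinal i0n) (fun i => a i != 0) (fun i => v (a i)) ai0)
  => i1 ai1 min_i1.
case: (@arg_maxP _ _ _ i1 (fun j => (a j != 0) && (v (a j) == v (a i1)))
  (fun j => j : nat)) => [|J]; first by rewrite ai1 eqxx.
move=> /andP[aJ /eqP vJ] max_J.
(* J has least valuation and is the last index to do so: after division by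
   a J all coefficients are integral and those beyond J are small. *)
pose al i := a i / a J.
have al_int i : (i < n)%N -> al i \in vint.
  move=> lt_in; rewrite /al.
  have [->|ai] := eqVneq (a i) 0; first by rewrite mul0r rpred0.
  rewrite inE vM ?invr_eq0 // vV // vJ subr_ge0.
  by apply/orP; right; apply: (min_i1 (Ordinal lt_in)).
have al_small i : (J < i < n)%N -> al i \in vsmall.
  case/andP=> lt_Ji lt_in; rewrite /al.
  have [->|ai] := eqVneq (a i) 0; first by rewrite mul0r rpred0.
  rewrite inE vM ?invr_eq0 // vV // vJ subr_gt0 lt_neqAle.
  rewrite (min_i1 (Ordinal lt_in)) // andbT; apply/orP; right.
  apply/eqP => vai; have := max_J (Ordinal lt_in).
  by rewrite /= ai -vai eqxx => /(_ isT); rewrite leEnat leqNgt lt_Ji.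
have rel_al : \sum_(i < n) al i * u ^+ i = 0.
  by rewrite /al; under eq_bigr do rewrite mulrAC; rewrite -mulr_suml rel mul0r.
pose R := \sum_(J.+1 <= i < n) al i * u ^+ i.
have R_small : R \in vsmall.
  rewrite /R big_seq; apply: rpred_sum => i; rewrite mem_index_iota => lt_Jin.
  by rewrite mulrC; apply: vsmallMl; [apply: rpredX | apply: al_small].
exists J, (fun i => if (i < J)%N then - al i else 0).
  move=> i; case: ifP => [lt_iJ|_]; last exact: rpred0.
  rewrite rpredN; apply/andP; split; first by rewrite rpredM ?rpredV.
  exact/al_int/(ltn_trans lt_iJ).
have -> : \sum_(i < J) (if (i < J)%N then - al i else 0) * u ^+ i =
    - \sum_(i < J) al i * u ^+ i.
  by rewrite -sumrN; apply: eq_bigr => i _; rewrite ltn_ord mulNr.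
move: rel_al; rewrite -(big_mkord xpredT (fun i => al i * u ^+ i)).
rewrite (big_cat_nat (n := J)) ?(ltnW (ltn_ord J)) //= [X in _ + X]big_ltn //=.
rewrite big_mkord -/R /al divff // mul1r addrA [_ + u ^+ J]addrC.
move/eqP; rewrite addr_eq0 => /eqP.
by rewrite opprK => ->; rewrite rpredN.
Qed.

Lemma powers_mod_span (u : C) J (beta : nat -> C) :
    u \in vint -> (forall i, beta i \in Kint) ->
    u ^+ J - \sum_(i < J) beta i * u ^+ i \in vsmall ->
  forall n, exists2 g : nat -> C, (forall i, g i \in Kint) &
    u ^+ n - \sum_(i < J) g i * u ^+ i \in vsmall.
Proof.
move=> u_int beta_int; case: J => [|J] relJ.
  by move: relJ; rewrite expr0 big_ord0 subr0 (negPf vsmall1).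
elim=> [|n [g g_int IHn]].
  exists (fun i => (i == 0)%:R) => [i|]; first exact: rpred_nat.
  rewrite big_ord_recl big1 => [|i _]; last by rewrite mul0r.
  by rewrite mul1r expr0 addr0 subrr rpred0.
pose gs i := if i is k.+1 then g k else 0.
pose g' i := gs i + g J * beta i.
exists g' => [i|].
  by rewrite rpredD ?rpredM //; case: i => [|i]; rewrite /gs ?rpred0.
have shift : \sum_(i < J.+1) gs i * u ^+ i =
    u * \sum_(i < J.+1) g i * u ^+ i - g J * u ^+ J.+1.
  rewrite big_ord_recl big_ord_recr /= mul0r add0r mulrDr mulr_sumr.
  rewrite [u * (g J * _)]mulrCA -exprS addrK.
  by apply: eq_bigr => i _; rewrite exprS mulrCA.
have -> : \sum_(i < J.+1) g' i * u ^+ i =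
    u * \sum_(i < J.+1) g i * u ^+ i - g J * u ^+ J.+1 +
    g J * \sum_(i < J.+1) beta i * u ^+ i.
  rewrite -shift mulr_sumr -big_split /=.
  by apply: eq_bigr => i _; rewrite mulrDl mulrA.
have -> : u ^+ n.+1 - (u * \sum_(i < J.+1) g i * u ^+ i - g J * u ^+ J.+1 +
    g J * \sum_(i < J.+1) beta i * u ^+ i) =
    u * (u ^+ n - \sum_(i < J.+1) g i * u ^+ i) +
    g J * (u ^+ J.+1 - \sum_(i < J.+1) beta i * u ^+ i).
  by rewrite exprS; ring.
by rewrite rpredD ?vsmallMl //; case/andP: (g_int J).
Qed.

Lemma powers_congr (u : C) J (beta : nat -> C) :
    u \in vint -> (forall i, beta i \in Kint) ->
    u ^+ J - \sum_(i < J) beta i * u ^+ i \in vsmall ->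
  exists i j, (i < j)%N /\ u ^+ j - u ^+ i \in vsmall.
Proof.
move=> u_int beta_int relJ; case: K_residue => S [S_int S_repr].
have residue_class n : exists f : {ffun 'I_J -> 'I_(size S)},
    u ^+ n - \sum_(i < J) S`_(f i) * u ^+ i \in vsmall.
  have [g g_int gP] := powers_mod_span u_int beta_int relJ n.
  have /fin_all_exists[f fP] : forall i : 'I_J, exists k : 'I_(size S),
      g i - S`_k \in vsmall.
    move=> i; have /andP[gK /vintP g_vint] := g_int i.
    have [y yS gy] := S_repr _ gK g_vint.
    have y_idx : (index y S < size S)%N by rewrite index_mem.
    exists (Ordinal y_idx); rewrite /= nth_index //.
    by case: gy => [->|gy]; [rewrite subrr rpred0 | apply/vsmallP; right].
  exists [ffun i => f i].
  have -> : u ^+ n - \sum_(i < J) S`_([ffun i => f i] i) * u ^+ i =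
      (u ^+ n - \sum_(i < J) g i * u ^+ i) +
      \sum_(i < J) (g i - S`_(f i)) * u ^+ i.
    rewrite -addrA; congr (_ + _); rewrite addrC -sumrB -sumrN.
    by apply: eq_bigr => i _; rewrite ffunE mulrBl addrAC subrr add0r.
  rewrite rpredD // rpred_sum // => i _; rewrite mulrC vsmallMl ?rpredX //.
have [i [j [f [lt_ij fi fj]]]] := finite_pigeonhole residue_class.
exists i, j; split => //.
have -> : u ^+ j - u ^+ i = (u ^+ j - \sum_(k < J) S`_(f k) * u ^+ k) -
    (u ^+ i - \sum_(k < J) S`_(f k) * u ^+ k) by rewrite opprB subrKA.
exact: rpredB.
Qed.

Lemma unit_pow_one_unit (u : C) : u \in L -> u != 0 -> v u = 0 ->
  exists2 N, (0 < N)%N & u ^+ N - 1 \in vsmall.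
Proof.
move=> uL u0 vu; have u_int : u \in vint by rewrite inE vu lexx orbT.
case: LK_finite => _ [b [_ b_span]].
have [a [aK a_neq0 rel]] :=
  subfield_span_dependent K_subfield (fun i _ => b_span _ (rpredX i uL)).
have [J [beta beta_int relJ]] :=
  monic_relation_mod (n := (size b).+1) u_int aK a_neq0 rel.
have [i [j [lt_ij uij]]] := powers_congr u_int beta_int relJ.
exists (j - i)%N; first by rewrite subn_gt0.
apply: (@vsmall_unitMl (u ^+ i)); rewrite ?expf_neq0 ?vX ?vu ?mulr0 //.
by rewrite mulrBr mulr1 -exprD subnKC // ltnW.
Qed.

Variable p : nat.

Lemma goss_v_unit s u : in_Goss v p L s -> u \in L -> u != 0 -> v u = 0 ->
  v (s u) = 0.
Proof.
move=> Gs uL u0 vu; have [N N_gt0 uN1] := unit_pow_one_unit uL u0 vu.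
have uN_one_unit : one_unit v L (u ^+ N).
  split; first exact: rpredX.
  by case/vsmallP: uN1 => [/subr0_eq|]; auto.
have vuN : v (u ^+ N) = 0 by rewrite vX // vu mulr0.
have := goss_v_one_unit Gs uN_one_unit (expf_neq0 _ u0) vuN.
rewrite (hom_LplusX L_subfield Gs.1) // vX ?(hom_Lplus_neq0 Gs.1) //.
by move/eqP; rewrite mulf_eq0 pnatr_eq0 gtn_eqF //= => /eqP.
Qed.

Lemma goss_v_factor s pi a (z : int) :
    in_Goss v p L s -> pi \in L -> pi != 0 -> a \in L -> a != 0 ->
    v a = z%:~R * v pi ->
  v (s a) = z%:~R * v (s pi).
Proof.
move=> Gs piL pi0 aL a0 va; have s_hom := Gs.1.
pose u := a * pi ^ (- z).
have uL : u \in L by rewrite rpredM ?rpredXz.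
have piz0 : pi ^ (- z) != 0 by rewrite expfz_neq0.
have u0 : u != 0 by rewrite mulf_neq0.
have vu : v u = 0 by rewrite vM // vXz // va intrN mulNr subrr.
have -> : a = u * pi ^ z by rewrite -mulrA -expfzDr // addNr expr0z mulr1.
rewrite (hom_LplusM s_hom) ?rpredXz ?expfz_neq0 //.
rewrite (hom_LplusXz L_subfield s_hom) //.
have spi0 : s pi != 0 by rewrite (hom_Lplus_neq0 s_hom).
rewrite vM ?(hom_Lplus_neq0 s_hom) ?expfz_neq0 //.
by rewrite (goss_v_unit Gs) // add0r vXz.
Qed.

End Extension.

End Valuation.

Theorem lemma2p6
  (p : nat) (C : closedFieldType) (v : C -> rat) (K L : {pred C})
  (e : nat) (vL : C -> rat) :
  (* C = C_P : complete, algebraically closed, char p, valued by v_P *)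
  prime p -> (p%:R : C) = 0 ->
  is_valuation v -> vcomplete v predT ->
  (* K = K_P : complete discretely valued subfield, v_P(K^x) = Z,
     finite residue field; its algebraic closure is dense in C *)
  is_subfield K -> vcomplete v K ->
  (forall x, x \in K -> x != 0 -> exists z : int, v x = z%:~R) ->
  (exists2 x, x \in K & x != 0 /\ v x = 1) ->
  finite_residue v K ->
  (forall c : C, exists a : nat -> C, (forall n, algebraic_over K (a n)) /\ vlim v a c) ->
  (* L / K_P a finite extension inside C *)
  is_subfield L -> finite_ext K L ->
  (* v_L = e_{L/K_P} v_P is the normalized valuation of L *)
  (0 < e)%N -> (forall x, vL x = e%:R * v x) ->
  (forall x, x \in L -> x != 0 -> exists z : int, vL x = z%:~R) ->
  (exists2 x, x \in L & x != 0 /\ vL x = 1) ->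
  exists r : (C -> C) -> rat,
    (goss_hom v p L r /\
     forall s, in_Goss v p L s ->
       forall a, a \in L -> a != 0 -> vL (s a) = r s * vL a) /\
    (forall r' : (C -> C) -> rat,
       goss_hom v p L r' ->
       (forall s, in_Goss v p L s ->
          forall a, a \in L -> a != 0 -> vL (s a) = r' s * vL a) ->
       forall s, in_Goss v p L s -> r' s = r s).
Proof.
move=> _ _ v_val _ K_sub _ _ _ K_res _ L_sub LK_fin e_gt0 vLE vL_int.
move=> [pi piL [pi0 vLpi]].
exists (fun s => vL (s pi)); split; [split|].
- move=> s t [s_hom _] [t_hom _].
  rewrite /goss_add !vLE vM ?(hom_Lplus_neq0 s_hom) ?(hom_Lplus_neq0 t_hom) //.
  by rewrite mulrDr.
- move=> s Gs a aL a0; have [z vLa] := vL_int a aL a0.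
  have e_neq0 : (e%:R : rat) != 0 by rewrite pnatr_eq0 -lt0n.
  have va : v a = z%:~R * v pi.
    by apply: (mulfI e_neq0); rewrite mulrCA -!vLE vLa vLpi mulr1.
  have := goss_v_factor v_val K_sub L_sub LK_fin K_res Gs piL pi0 aL a0 va.
  rewrite vLa !vLE => ->.
  by rewrite mulrCA mulrC.
- by move=> r' _ r'E s Gs; have := r'E s Gs pi piL pi0; rewrite vLpi mulr1.
Qed.
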